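(* Let $r(\cdot)\in\mathcal{P}^{\log}(\mathbb{R})$ with $r(x)=2$ for all $x\in[0,1]$ and $r^-_{[0,16]}>1$. Then the kernel $K(x,y)=K_1(x-y)K_2(y)$ belongs to $H_{r(\cdot),1}$.
   Context: Here $n=1$. Fix $\beta>0$; $K_1(t)=\chi_{[2,3]}(t)$ and $K_2(t)=t^{-1/2}\big[\log(e/t)\big]^{-\frac{1+\beta}{2}}\chi_{(0,1)}(t)$. Cubes are intervals $Q$; $mQ$ is the concentric interval of length $m\ell(Q)$. $\|f\|_{p(\cdot)}=\inf\{\lambda>0:\int_{\{p<\infty\}}|f/\lambda|^{p(x)}dx+\|(f/\lambda)\chi_{\{p=\infty\}}\|_\infty\le1\}$ for measurable $p(\cdot):\mathbb{R}\to[1,\infty]$. $\mathcal{P}^{\log}(\mathbb{R})$: $1/p$ satisfies $|1/p(x)-1/p(y)|\le c_0/(-\log|x-y|)$ for $|x-y|<1/2$ and $|1/p(x)-1/p_\infty|\le c_\infty/\log(e+|x|)$. $r^-_E=\operatorname{ess\,inf}_Er$. $K\in H_{r(\cdot),1}$ means $\sup_Q\sup_{x,z\in\frac12Q}\sum_{m\ge1}2^m\ell(Q)\frac{\|[K(x,\cdot)-K(z,\cdot)]\chi_{2^mQ\setminus2^{m-1}Q}\|_{r(\cdot)}}{\|\chi_{2^mQ}\|_{r(\cdot)}}<\infty$. *)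

From HB Require Import structures.
From mathcomp Require Import all_boot all_order all_algebra.
From mathcomp Require Import all_classical all_reals all_analysis.
From mathcomp Require Import ess_sup_inf measurable_realfun.
Set Implicit Arguments. Unset Strict Implicit. Unset Printing Implicit Defensive.
Import Order.TTheory GRing.Theory Num.Def Num.Theory.
Import numFieldNormedType.Exports.
Local Open Scope classical_set_scope.
Local Open Scope ring_scope.

(* Variable exponents on R are functions p : R -> \bar R with values in [1, +oo]. *)

Section VarExp.
Variable R : realType.
Local Notation mu := (@lebesgue_measure R).

Definition inv_exp (q : \bar R) : R :=
  match q with EFin r => r^-1 | _ => 0 end.

Definition modular (p : R -> \bar R) (f : R -> R) (l : R) : \bar R :=
  ((\int[mu]_(x in [set x | p x < +oo]%E) ((`|f x| / l) `^ fine (p x))%:E)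
   + ess_sup mu (fun x => if p x == +oo%E then (`|f x| / l)%:E else 0%E))%E.

(* Luxemburg norm ||f||_{p(.)} (as an extended real, +oo if the set is empty) *)
Definition vnorm (p : R -> \bar R) (f : R -> R) : \bar R :=
  ereal_inf [set l%:E | l in [set l : R | 0 < l /\ (modular p f l <= 1)%E]].

Definition is_exponent (p : R -> \bar R) : Prop :=
  measurable_fun [set: R] p /\ forall x, (1 <= p x)%E.

Definition log_holder (p : R -> \bar R) : Prop :=
  is_exponent p /\
  (exists c0 : R, forall x y, `|x - y| < 1/2 ->
      `|inv_exp (p x) - inv_exp (p y)| <= c0 / (- ln `|x - y|)) /\
  (exists (pinf : \bar R) (cinf : R), (1 <= pinf)%E /\ forall x,
      `|inv_exp (p x) - inv_exp pinf| <= cinf / ln (expR 1 + `|x|)).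

Definition ess_inf_itv (r : R -> \bar R) (a b : R) : \bar R :=
  ess_inf (mrestr mu (measurable_itv `[a, b])) r.

Definition ind (A : set R) (x : R) : R := if `[< A x >] then 1 else 0.

Definition cube (c l : R) : set R := `[c - l / 2, c + l / 2].
Definition dil (m : R) (c l : R) : set R := cube c (m * l).

Definition in_H (r : R -> \bar R) (K : R -> R -> R) : Prop :=
  exists C : R, forall (c l : R), 0 < l -> forall x z,
    dil (1/2) c l x -> dil (1/2) c l z ->
    (\sum_(1 <= m <oo)
       ((2 ^+ m * l)%R%:E *
        vnorm r (fun y => ((K x y - K z y) *
                   ind (dil (2 ^+ m) c l `\` dil (2 ^+ m.-1) c l) y)%R)
        * ((fine (vnorm r (ind (dil (2 ^+ m)%R c l))))^-1)%:E) <= C%:E)%E.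

Definition K1 (t : R) : R := ind `[2, 3] t.
Definition K2 (beta : R) (t : R) : R :=
  if (0 < t) && (t < 1) then
    t `^ (- (1/2)) * (ln (expR 1 / t)) `^ (- ((1 + beta) / 2))
  else 0.
Definition Kker (beta : R) (x y : R) : R := K1 (x - y) * K2 beta y.

End VarExp.

From HB Require Import structures.
From mathcomp Require Import all_boot all_order all_algebra.
From mathcomp Require Import all_classical all_reals all_analysis.
From mathcomp Require Import ess_sup_inf measurable_realfun.
From mathcomp Require Import ring lra.
Import Order.TTheory GRing.Theory Num.Def Num.Theory.
Import numFieldNormedType.Exports.
Local Open Scope classical_set_scope.
Local Open Scope ring_scope.
Set Implicit Arguments. Unset Strict Implicit. Unset Printing Implicit Defensive.

(* For x, z in Q/2, the m-th term of the H_{r(.),1} sum vanishes unless the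
   annulus 2^m Q \ 2^(m-1) Q contains a point y of (0,1) with x - y or z - y in
   [2,3]; this forces 2^m l(Q) < 24 and puts an interval of length 2 inside
   2^m Q.  The kernel difference is dominated by K2, and r = 2 on the support
   of K2, so its modular at lambda = 1 + 1/beta is at most
   lambda^-2 * int_0^1 dt / (t (1 - ln t)^(1+beta)) = lambda^-2 / beta <= 1:
   its norm is at most 1 + 1/beta.  Since r >= 1, the indicator of a set
   containing an interval of length 1 has norm at least 1.  The sum is thus at
   most (1 + 1/beta) times the sum of the dyadic lengths 2^m l(Q) below 24,
   i.e. at most 48 (1 + 1/beta). *)

Section LuxemburgNorm.
Variable R : realType.
Local Notation mu := (@lebesgue_measure R).
Implicit Types (p : R -> \bar R) (f : R -> R) (A : set R).

Lemma lebesgue_measure_setT_gt0 : (0 < mu [set: R])%E.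
Proof.
have mu01 : mu `[0%R, 1%R] = 1%E.
  by rewrite lebesgue_measure_itv/= lte_fin ltr01 sube0.
apply: (@lt_le_trans _ _ (mu `[0%R, 1%R])); first by rewrite mu01 lte01.
by apply: le_measure; rewrite ?inE //; exact: measurable_itv.
Qed.

Lemma exponent_fine_ge1 p x : is_exponent p -> (p x < +oo)%E -> 1 <= fine (p x).
Proof.
by move=> [_ p1] px; have := p1 x; case: (p x) px => //= r _; rewrite lee_fin.
Qed.

Lemma exponent_fine_neq0 p x : is_exponent p -> (p x < +oo)%E -> fine (p x) != 0.
Proof.
by move=> pe px; apply/eqP => p0; have := exponent_fine_ge1 pe px; rewrite p0 ler10.
Qed.

Lemma measurable_exponent_lty p : is_exponent p -> measurable [set x | (p x < +oo)%E].
Proof.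
move=> [pm p1].
have := pm measurableT _ (emeasurable_itv (R:=R) `]-oo%E, +oo%E[).
rewrite setTI; congr measurable; apply/seteqP; split => x /=; rewrite in_itv /=.
  by move=> /andP[].
by move=> ->; rewrite andbT; apply: lt_le_trans (p1 x); exact: ltNyr.
Qed.

Lemma vnorm_ge0 p f : (0 <= vnorm p f)%E.
Proof. by apply/ereal_infP => _ [l [l0 _] <-]; rewrite lee_fin ltW. Qed.

Lemma vnorm_le p f l : 0 < l -> (modular p f l <= 1)%E -> (vnorm p f <= l%:E)%E.
Proof. by move=> l0 ml; apply: ereal_inf_lbound; exists l. Qed.

Lemma vnorm_ge p f a : (forall l, 0 < l -> l < a -> (1 < modular p f l)%E) ->
  (a%:E <= vnorm p f)%E.
Proof.
move=> H; apply/ereal_infP => _ [l [l0 ml] <-]; rewrite lee_fin leNgt.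
by apply/negP => la; have := H l l0 la; rewrite ltNge ml.
Qed.

Lemma modular_lty p f l : (forall x, f x != 0 -> (p x < +oo)%E) ->
  modular p f l =
  (\int[mu]_(x in [set x | (p x < +oo)%E]) ((`|f x| / l) `^ fine (p x))%:E)%E.
Proof.
move=> fp; rewrite /modular (_ : (fun x => _) = cst 0%E).
  by rewrite ess_sup_cst ?lebesgue_measure_setT_gt0 // adde0.
apply/funext => x; case: eqP => //= px.
have /negPn/eqP -> : ~~ (f x != 0) by apply: contraTN isT => /fp; rewrite px.
by rewrite normr0 mul0r.
Qed.

Lemma modular_sqr p f l : is_exponent p -> 0 <= l -> (forall x, f x != 0 -> p x = 2%:E) ->
  modular p f l =
  (\int[mu]_(x in [set x | (p x < +oo)%E]) ((`|f x| / l) ^+ 2)%:E)%E.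
Proof.
move=> pe l0 p2; rewrite modular_lty => [|x /p2 ->]; last exact: ltry.
apply: eq_integral => x; rewrite inE /= => px; congr EFin.
have [fx0|/p2 ->] := eqVneq (f x) 0; last by rewrite /= powR_mulrn ?divr_ge0.
by rewrite fx0 normr0 mul0r expr0n powR0 // exponent_fine_neq0.
Qed.

Lemma vnorm_eq0 p f : is_exponent p -> (forall x, f x = 0) -> vnorm p f = 0%E.
Proof.
move=> pe f0; apply/eqP; rewrite eq_le vnorm_ge0 andbT.
apply/lee_addgt0Pr => e e0; rewrite add0e; apply: vnorm_le => //.
rewrite modular_lty => [|x]; last by rewrite f0 eqxx.
rewrite (@eq_integral _ _ _ mu _ (cst 0%E)) ?integral0 // => x; rewrite inE /= => px.
by rewrite f0 normr0 mul0r powR0 // exponent_fine_neq0.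
Qed.

Lemma indE A : ind A = \1_A.
Proof.
apply/funext => x; rewrite /ind /indic.
by case: (asboolP (A x)) => Ax; [rewrite mem_set|rewrite memNset].
Qed.

Lemma ind_ge0 A y : 0 <= ind A y.
Proof. by rewrite indE indicE. Qed.

Lemma ind_le1 A y : ind A y <= 1.
Proof. by rewrite indE indicE lern1 leq_b1. Qed.

Lemma ind_neq0 A y : ind A y != 0 -> A y.
Proof. by rewrite /ind; case: (asboolP (A y)) => //; rewrite eqxx. Qed.

Lemma integral_ind_powR_ge p A B l : is_exponent p -> measurable A -> measurable B ->
  B `<=` A -> 0 < l -> l <= 1 ->
  ((l^-1)%:E * mu (B `&` [set x | (p x < +oo)%E]) <=
   \int[mu]_(x in [set x | (p x < +oo)%E]) ((`|ind A x| / l) `^ fine (p x))%:E)%E.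
Proof.
move=> pe mA mB BA l0 l1; set D := [set x | _]; have mD := measurable_exponent_lty pe.
rewrite (@eq_integral _ _ _ mu _ (fun x => (\1_A x * l^-1 `^ fine (p x))%:E)); last first.
  move=> x; rewrite inE /= => px; congr EFin; rewrite indE indicE.
  case: (x \in A); first by rewrite normr1 div1r mul1r.
  by rewrite normr0 !mul0r powR0 // exponent_fine_neq0.
rewrite -integral_indic // -ge0_integralZl_EFin ?invr_ge0 ?(ltW l0) //; last first.
  by apply/measurable_EFinP; exact: measurable_indic.
apply: ge0_le_integral => //.
- by move=> x _; rewrite mule_ge0 // lee_fin ?invr_ge0 ?(ltW l0) // indicE.
- by apply/measurable_EFinP/measurable_funM => //; exact: measurable_indic.
- apply/measurable_EFinP/measurable_funM; first exact: measurable_indic.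
  apply: measurableT_comp; first exact: measurable_powRr.
  apply: measurableT_comp; first exact: fine_measurable.
  by case: pe => pm _; exact: measurable_funS pm.
- move=> x Dx; rewrite -EFinM lee_fin !indicE.
  have [xB|] := boolP (x \in B); last by rewrite mulr0 mulr_ge0 ?powR_ge0.
  rewrite (mem_set (BA _ (set_mem xB))) mulr1 mul1r.
  by apply: le1r_powR; [rewrite invf_ge1|exact: exponent_fine_ge1].
Qed.

Lemma modular_ind_gt1 p A B l : is_exponent p -> measurable A -> measurable B ->
  B `<=` A -> (1 <= mu B)%E -> 0 < l -> l < 1 -> (1 < modular p (ind A) l)%E.
Proof.
move=> pe mA mB BA muB l0 l1; set D := [set x | (p x < +oo)%E].
have mD : measurable D := measurable_exponent_lty pe.
have il1 : 1 < l^-1 by rewrite invf_gt1.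
rewrite /modular; set I := (\int[mu]_(x in D) _)%E; set h := (fun x => if _ then _ else _).
have I0 : (0 <= I)%E by apply: integral_ge0 => x _; rewrite lee_fin powR_ge0.
have h0 : (0 <= ess_sup mu h)%E.
  apply: ess_sup_gee; first exact: lebesgue_measure_setT_gt0.
  apply: nearW => x; rewrite /h; case: ifP => // _.
  by rewrite lee_fin divr_ge0 // ltW.
(* either r < +oo a.e. on B, or r = +oo on a non-null part of B *)
have [BD0|BD0] := eqVneq (mu (B `\` D)) 0%E.
  apply: (@lt_le_trans _ _ I); last by rewrite leeDl.
  apply: lt_le_trans (integral_ind_powR_ge pe mA mB BA l0 (ltW l1)).
  have muBD : (1 <= mu (B `&` D))%E.
    by rewrite (le_trans muB) // (measureDI mu mB mD) [X in (X + _)%E](_ : _ = 0%E) ?add0e.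
  apply: (@lt_le_trans _ _ (l^-1)%:E); first by rewrite lte_fin.
  by rewrite -[X in (X <= _)%E]mule1 lee_wpmul2l // lee_fin invr_ge0 ltW.
apply: (@lt_le_trans _ _ (ess_sup mu h)); last by rewrite leeDr.
rewrite ltNge; apply/negP => /ess_supP [N [mN muN sN]].
move/eqP: BD0; apply; apply/eqP; rewrite eq_le measure_ge0 andbT -muN.
apply: le_measure; rewrite ?inE; [exact: measurableD|exact: mN|].
move=> x [xB xD]; apply: sN => /=; rewrite /h.
have -> : p x = +oo%E by move: xD; rewrite /D /=; case: (p x) => //= r; rewrite ltey.
rewrite eqxx lee_fin indE indicE mem_set; last exact: BA.
by rewrite normr1 div1r; apply/negP; rewrite -ltNge.
Qed.

Lemma vnorm_ind_ge1 p A a b : is_exponent p -> measurable A -> 1 <= b - a ->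
  `[a, b] `<=` A -> (1 <= vnorm p (ind A))%E.
Proof.
move=> pe mA ab BA; apply: vnorm_ge => l l0 l1.
apply: (modular_ind_gt1 pe mA (measurable_itv _) BA) => //.
have ab' : a < b by lra.
by rewrite lebesgue_measure_itv /= lte_fin ab' -EFinB lee_fin.
Qed.

End LuxemburgNorm.

Section LogWeight.
Variable R : realType.
Local Notation mu := (@lebesgue_measure R).

Lemma is_derive1_comp (f g : R -> R) (x df dg : R) :
  is_derive x 1 f df -> is_derive (f x) 1 g dg -> is_derive x 1 (g \o f) (dg * df).
Proof.
move=> hf hg; apply: DeriveDef.
  by apply/derivable1_diffP/differentiable_comp; apply/derivable1_diffP; exact: ex_derive.
rewrite -derive1E derive1_comp; [|exact: ex_derive|exact: ex_derive].
by rewrite !derive1E !derive_val.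
Qed.

Definition log_weight (b t : R) : R := t `^ (-1) * (1 - ln t) `^ (- (1 + b)).

Definition log_weight_primitive (b t : R) : R := b^-1 * (1 - ln t) `^ (- b).

Lemma one_sub_ln_gt0 (t : R) : 0 < t -> t < expR 1 -> 0 < 1 - ln t.
Proof.
by move=> t0 te; rewrite subr_gt0 -[X in _ < X](expRK 1) ltr_ln ?posrE ?expR_gt0.
Qed.

Lemma is_derive_one_sub_ln (t : R) : 0 < t ->
  is_derive t 1 (cst 1 - @ln R) (0 - t^-1).
Proof. by move=> t0; exact: is_deriveB (is_derive1_ln t0). Qed.

Lemma is_derive_log_weight_primitive b t : 0 < b -> 0 < t -> t < expR 1 ->
  is_derive t 1 (log_weight_primitive b) (log_weight b t).
Proof.
move=> b0 t0 te.
have ho := is_deriveZ b^-1 (is_derive1_powR (- b) (one_sub_ln_gt0 t0 te)).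
have -> : log_weight_primitive b =
    (b^-1 \*: (@powR R ^~ (- b))) \o (cst 1 - @ln R) by apply/funext.
apply: is_derive_eq (is_derive1_comp (is_derive_one_sub_ln t0) ho) _.
rewrite /log_weight /= powR_inv1 ?(ltW t0) // (_ : - b - 1 = - (1 + b)); last by ring.
by rewrite /GRing.scale /=; field; rewrite !gt_eqF.
Qed.

Lemma continuous_log_weight b t : 0 < t -> t < expR 1 -> {for t, continuous (log_weight b)}.
Proof.
move=> t0 te.
have hc := is_derive1_comp (is_derive_one_sub_ln t0)
  (is_derive1_powR (- (1 + b)) (one_sub_ln_gt0 t0 te)).
have -> : log_weight b =
    (@powR R ^~ (-1)) * ((@powR R ^~ (- (1 + b))) \o (cst 1 - @ln R)) by apply/funext.
apply/differentiable_continuous/derivable1_diffP.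
by case: (is_deriveM (is_derive1_powR (-1) t0) hc).
Qed.

Lemma log_weight_ge0 b t : 0 <= log_weight b t.
Proof. by rewrite mulr_ge0 // powR_ge0. Qed.

Lemma measurable_log_weight b : measurable_fun setT (log_weight b).
Proof.
have -> : log_weight b =
  (@powR R ^~ (-1)) \* ((@powR R ^~ (- (1 + b))) \o (fun t => 1 - ln t)) by [].
apply: measurable_funM; first exact: measurable_powR.
apply: measurableT_comp; first exact: measurable_powR.
by apply: measurable_funB => //; exact: measurable_ln.
Qed.

Lemma integral_log_weight_itv_le b a : 0 < b -> 0 < a -> a < 1 ->
  (\int[mu]_(x in `[a, 1%R]) (log_weight b x)%:E <= (b^-1)%:E)%E.
Proof.
move=> b0 a0 a1; have e1 : (1 : R) < expR 1 by rewrite -expR0 ltr_expR.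
have cF t : 0 < t -> t < expR 1 -> {for t, continuous (log_weight_primitive b)}.
  move=> t0 te; apply/differentiable_continuous/derivable1_diffP.
  by case: (is_derive_log_weight_primitive b0 t0 te).
rewrite (@continuous_FTC2 _ _ (log_weight_primitive b)) //.
- rewrite /log_weight_primitive ln1 subr0 powR1 mulr1 lee_fin lerBlDr lerDl.
  by rewrite mulr_ge0 ?invr_ge0 ?(ltW b0) ?powR_ge0.
- apply: continuous_in_subspaceT => x; rewrite inE /= in_itv /= => /andP[ax x1].
  by apply: continuous_log_weight; [exact: lt_le_trans ax|exact: le_lt_trans x1 e1].
- split.
  + move=> x; rewrite in_itv /= => /andP[ax x1].
    by case: (is_derive_log_weight_primitive b0 (lt_trans a0 ax) (lt_trans x1 e1)).
  + by apply: cvg_at_right_filter; exact: cF a0 (lt_trans a1 e1).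
  + by apply: cvg_at_left_filter; exact: cF _ ltr01 e1.
- move=> x; rewrite in_itv /= => /andP[ax x1].
  rewrite derive1E.
  by case: (is_derive_log_weight_primitive b0 (lt_trans a0 ax) (lt_trans x1 e1)).
Qed.

Lemma integral_log_weight_le b : 0 < b ->
  (\int[mu]_(x in `]0%R, 1%R]) (log_weight b x)%:E <= (b^-1)%:E)%E.
Proof.
move=> b0; pose S n := `[(n.+2%:R)^-1, 1%R]%classic : set R.
have US : \bigcup_n S n = `]0, 1%R]%classic.
  apply/seteqP; split => x.
    move=> [n _]; rewrite /S /= !in_itv /= => /andP[h1 ->]; rewrite andbT.
    by apply: lt_le_trans h1; rewrite invr_gt0 ltr0n.
  rewrite /= in_itv /= => /andP[x0 x1]; exists (truncn x^-1) => //.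
  rewrite /S /= in_itv /= x1 andbT -(invrK x) lef_pV2 ?posrE ?invr_gt0 ?ltr0n //.
  apply/ltW/(lt_le_trans (truncnS_gt _)); rewrite ler_nat invrK; exact: leqnSn.
have nd : nondecreasing_seq S.
  move=> m n mn; rewrite subsetEset => x; rewrite /S /= !in_itv /= => /andP[h1 ->].
  by rewrite andbT; apply: le_trans h1; rewrite lef_pV2 ?posrE ?ltr0n // ler_nat.
have mS n : measurable (S n) by exact: measurable_itv.
have mf n : measurable_fun (S n) (fun x => (log_weight b x)%:E).
  by apply/measurable_EFinP; apply: measurable_funS (measurable_log_weight b).
have f0 n x : S n x -> (0 <= (log_weight b x)%:E)%E by rewrite lee_fin log_weight_ge0.
have := ge0_nondecreasing_set_cvg_integral (mu := mu) nd mS mf f0; rewrite US => cvgS.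
rewrite -(cvg_lim _ cvgS) //; apply: lime_le; first by apply/cvg_ex; eexists; exact: cvgS.
apply: nearW => n; apply: integral_log_weight_itv_le => //.
by rewrite invf_lt1 ?ltr0n // ltr1n.
Qed.

End LogWeight.

Section Kernel.
Variable R : realType.
Local Notation mu := (@lebesgue_measure R).
Implicit Types (p : R -> \bar R) (f : R -> R).

Lemma K2_out (b t : R) : ~~ ((0 < t) && (t < 1)) -> K2 b t = 0.
Proof. by rewrite /K2 => /negbTE ->. Qed.

Lemma K2_ge0 (b t : R) : 0 <= K2 b t.
Proof. by rewrite /K2; case: ifP => // _; rewrite mulr_ge0 // powR_ge0. Qed.

Lemma le_K2_eq0 b (u t : R) : `|u| <= K2 b t -> ~~ ((0 < t) && (t < 1)) -> u = 0.
Proof. by move=> uK t01; apply/normr0_eq0/le_anti; rewrite normr_ge0 -(K2_out b t01) uK. Qed.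

Lemma ln_expR1_div (t : R) : 0 < t -> ln (expR 1 / t) = 1 - ln t.
Proof. by move=> t0; rewrite lnM ?posrE ?expR_gt0 ?invr_gt0 // expRK lnV ?posrE. Qed.

Lemma K2E (b t : R) : K2 b t =
  \1_`]0%R, 1%R[ t * (t `^ (- (1/2)) * (1 - ln t) `^ (- ((1 + b) / 2))).
Proof.
rewrite /K2 indicE; case: ifPn => [/andP[t0 t1]|t01].
  by rewrite mem_set ?mul1r ?ln_expR1_div //= in_itv /= t0.
by rewrite memNset ?mul0r //= in_itv /=; exact/negP.
Qed.

Lemma K2_sqr (b t : R) : 0 < t -> t < 1 -> K2 b t ^+ 2 = log_weight b t.
Proof.
move=> t0 t1; have powR_sqr (a s : R) : (a `^ s) ^+ 2 = a `^ (s * 2).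
  by rewrite powRrM -powR_mulrn // powR_ge0.
rewrite K2E indicE mem_set /= ?in_itv /= ?t0 ?t1 // !exprMn expr1n mul1r !powR_sqr.
by congr (_ `^ _ * _ `^ _); field.
Qed.

Lemma measurable_K2 (b : R) : measurable_fun setT (K2 b).
Proof.
rewrite (_ : K2 b = \1_`]0%R, 1%R[ \* ((@powR R ^~ (- (1/2))) \*
    ((@powR R ^~ (- ((1 + b) / 2))) \o (fun t => 1 - ln t)))); last first.
  by apply/funext => t; rewrite K2E.
apply: measurable_funM; first exact: measurable_indic.
apply: measurable_funM; first exact: measurable_powR.
apply: measurableT_comp; first exact: measurable_powR.
by apply: measurable_funB => //; exact: measurable_ln.
Qed.

Lemma integral_sqr_le_K2 b (D : set R) f : 0 < b -> measurable D ->
  measurable_fun setT f -> (forall y, `|f y| <= K2 b y) ->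
  (\int[mu]_(x in D) (f x ^+ 2)%:E <= (b^-1)%:E)%E.
Proof.
move=> b0 mD mf fK; pose w := (fun x => (log_weight b x)%:E) \_ `]0%R, 1%R].
have w0 x : (0 <= w x)%E.
  by rewrite /w patchE; case: ifP => // _; rewrite lee_fin log_weight_ge0.
have mw : measurable_fun setT w.
  apply/(measurable_restrictT _ _).1 => //; apply/measurable_EFinP.
  exact: measurable_funS (measurable_log_weight b).
have le_w x : D x -> ((f x ^+ 2)%:E <= w x)%E.
  move=> _; have [/andP[x0 x1]|x01] := boolP ((0 < x) && (x < 1)); last first.
    by rewrite (le_K2_eq0 (fK x) x01) expr0n.
  rewrite /w patchE mem_set; last by rewrite /= in_itv /= x0 ltW.
  rewrite lee_fin -(K2_sqr b x0 x1) -(real_normK (num_real _)).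
  by rewrite ler_sqr ?nnegrE ?K2_ge0.
apply: (@le_trans _ _ (\int[mu]_(x in D) w x)%E).
  apply: ge0_le_integral => //.
  - by move=> x _; rewrite lee_fin sqr_ge0.
  - by apply/measurable_EFinP/measurable_funX; exact: measurable_funS mf.
  - exact: measurable_funS mw.
apply: (@le_trans _ _ (\int[mu]_(x in setT) w x)%E); first exact: ge0_subset_integral.
by rewrite -integral_mkcond integral_log_weight_le.
Qed.

Lemma modular_le1_of_le_K2 b p f : 0 < b -> is_exponent p ->
  (forall y, 0 <= y <= 1 -> p y = 2%:E) -> measurable_fun setT f ->
  (forall y, `|f y| <= K2 b y) -> (modular p f (1 + b^-1) <= 1)%E.
Proof.
move=> b0 pe p2 mf fK; set lam := 1 + b^-1.
have lam0 : 0 < lam by rewrite addr_gt0 // invr_gt0.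
rewrite (modular_sqr pe (ltW lam0)) => [|y fy0]; last first.
  have /andP[y0 y1] : (0 < y) && (y < 1).
    by apply: contraNT fy0 => /(le_K2_eq0 (fK y)) ->; rewrite eqxx.
  by apply: p2; rewrite !ltW.
under eq_integral do rewrite expr_div_n (real_normK (num_real _)) mulrC EFinM.
have mD := measurable_exponent_lty pe.
rewrite ge0_integralZl_EFin ?invr_ge0 ?sqr_ge0 //; last 2 first.
- by move=> x _; rewrite lee_fin sqr_ge0.
- by apply/measurable_EFinP/measurable_funX; exact: measurable_funS mf.
apply: (@le_trans _ _ ((lam ^+ 2)^-1%:E * (b^-1)%:E))%E.
  by rewrite lee_wpmul2l ?lee_fin ?invr_ge0 ?sqr_ge0 ?integral_sqr_le_K2.
have b0' : 0 < b^-1 by rewrite invr_gt0.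
by rewrite -EFinM lee_fin ler_pdivrMl ?exprn_gt0 // mulr1 /lam; nra.
Qed.

Definition Kker_diff_on (b x z : R) (S : set R) (y : R) : R :=
  (Kker b x y - Kker b z y) * ind S y.

Lemma norm_Kker_diff_on_le b x z S y : `|Kker_diff_on b x z S y| <= K2 b y.
Proof.
have K1_01 (t : R) : K1 t = 0 \/ K1 t = 1 by rewrite /K1 /ind; case: ifP; [right|left].
have K1diff : `|K1 (x - y) - K1 (z - y)| <= 1.
  case: (K1_01 (x - y)) => ->; case: (K1_01 (z - y)) => ->;
  by rewrite ?subrr ?normr0 ?sub0r ?subr0 ?normrN ?normr1.
rewrite /Kker_diff_on /Kker -mulrBl !normrM.
rewrite (ger0_norm (K2_ge0 _ _)) (ger0_norm (ind_ge0 _ _)).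
rewrite -[X in _ <= X]mulr1; apply: ler_pM; rewrite ?mulr_ge0 ?K2_ge0 ?ind_ge0 ?ind_le1 //.
by rewrite -[X in _ <= X]mul1r; apply: ler_pM; rewrite ?K2_ge0.
Qed.

Lemma Kker_diff_on_neq0 b x z S y : Kker_diff_on b x z S y != 0 ->
  [/\ S y, 0 < y < 1 & exists2 w, w = x \/ w = z & 2 <= w - y <= 3].
Proof.
rewrite /Kker_diff_on /Kker -mulrBl !mulf_eq0 !negb_or => /andP[/andP[dK1 K2y] Sy].
split; [exact: ind_neq0|by apply: contraNT K2y => /K2_out ->|].
rewrite /K1 in dK1 *; have [K1x|/ind_neq0 K1x] := eqVneq (ind `[2, 3] (x - y)) 0.
  exists z; first by right.
  by move: dK1; rewrite K1x sub0r oppr_eq0 => /ind_neq0; rewrite /= in_itv.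
by exists x; [left|move: K1x; rewrite /= in_itv].
Qed.

Lemma measurable_Kker_diff_on b x z S : measurable S ->
  measurable_fun setT (Kker_diff_on b x z S).
Proof.
move=> mS; have mK1 w : measurable_fun setT (fun y : R => K1 (w - y)).
  apply: (measurableT_comp (f := @K1 R)); last exact: measurable_funB.
  by rewrite /K1 indE; apply: measurable_indic; exact: measurable_itv.
rewrite /Kker_diff_on /Kker; apply: measurable_funM.
  by apply: measurable_funB; apply: measurable_funM => //; exact: measurable_K2.
by rewrite indE; exact: measurable_indic.
Qed.

End Kernel.

Section Summands.
Variable R : realType.

Lemma dilP (m c l y : R) : dil m c l y <-> c - m * l / 2 <= y <= c + m * l / 2.
Proof. by rewrite /dil /cube /= in_itv. Qed.

Lemma dyadic_annulus_near (c l w y : R) (m : nat) : 0 < l ->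
  dil (1/2) c l w -> 2 <= w - y <= 3 ->
  (dil (2 ^+ m) c l `\` dil (2 ^+ m.-1) c l) y ->
  2 ^+ m * l < 24 /\ `[y, y + 2] `<=` dil (2 ^+ m) c l.
Proof.
move=> l0 /dilP/andP[w1 w2] /andP[wy1 wy2] [/dilP/andP[y1 y2] ny].
have k1 : (1 : R) <= 2 ^+ m.-1 by rewrite exprn_ege1 // ler1n.
have km : (2 : R) ^+ m <= 2 * 2 ^+ m.-1.
  by case: m {y1 y2 ny k1} => [|m] /=; rewrite ?expr0 ?mulr1 ?ler1n // exprS.
have m1 : (1 : R) <= 2 ^+ m by rewrite exprn_ege1 // ler1n.
set k := (2 : R) ^+ m.-1 in k1 km ny; set M := (2 : R) ^+ m in km m1 y1 y2 *.
have kl : l <= k * l by rewrite ler_peMl // ltW.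
have Ml : l <= M * l by rewrite ler_peMl // ltW.
have Mk : M * l <= 2 * (k * l) by rewrite mulrA ler_wpM2r // ltW.
split.
  have : ~~ (c - k * l / 2 <= y <= c + k * l / 2) by apply/negP => h; apply/ny/dilP.
  by rewrite negb_and -!ltNge => /orP[|]; lra.
by move=> t; rewrite /= in_itv /= => /andP[t1 t2]; apply/dilP; lra.
Qed.

Definition dyadic_below (a l : R) (m : nat) : R :=
  if 2 ^+ m * l < a then 2 ^+ m * l else 0.

Lemma dyadic_below_ge0 a l m : 0 < l -> 0 <= dyadic_below a l m.
Proof. by move=> l0; rewrite /dyadic_below; case: ifP => // _; rewrite mulr_ge0 ?ltW. Qed.

Lemma sum_dyadic_below_le a l n : 0 <= a -> 0 < l ->
  \sum_(1 <= m < n) dyadic_below a l m <= 2 * a.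
Proof.
move=> a0 l0; case: n => [|n]; first by rewrite big_geq // mulr_ge0.
suff : \sum_(1 <= m < n.+1) dyadic_below a l m <= 2 ^+ n.+1 * l /\
       \sum_(1 <= m < n.+1) dyadic_below a l m <= 2 * a by case.
elim: n => [|n [IH1 IH2]].
  by rewrite big_geq // expr1; split; apply: mulr_ge0 => //; exact: ltW.
rewrite big_nat_recr //= [2 ^+ n.+2]exprS -mulrA /dyadic_below.
set s := \sum_(1 <= m < n.+1) dyadic_below a l m in IH1 IH2 *.
set d := 2 ^+ n.+1 * l in IH1 *; have d0 : 0 <= d by rewrite mulr_ge0 ?ltW.
by case: (ltP d a) => hd; split; lra.
Qed.

Lemma nneseries_dyadic_below_le (a l k : R) : 0 <= a -> 0 < l -> 0 <= k ->
  (\sum_(1 <= m <oo) (dyadic_below a l m * k)%:E <= (2 * a * k)%:E)%E.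
Proof.
move=> a0 l0 k0; apply: lime_le.
  by apply: is_cvg_nneseries => m _ _; rewrite lee_fin mulr_ge0 ?dyadic_below_ge0.
apply: nearW => n /=; rewrite sumEFin lee_fin -mulr_suml ler_wpM2r //.
exact: sum_dyadic_below_le.
Qed.

Lemma inv_fine_le1 (v : \bar R) : (1 <= v)%E -> (fine v)^-1 <= 1.
Proof.
case: v => [v| |] //= v1.
by rewrite invf_le1 -?lee_fin // (lt_le_trans ltr01).
Qed.

Lemma Kker_summand_le (b : R) (r : R -> \bar R) (c l x z : R) (m : nat) :
  0 < b -> is_exponent r ->
  (forall y, 0 <= y <= 1 -> r y = 2%:E) -> 0 < l ->
  dil (1/2) c l x -> dil (1/2) c l z ->
  ((2 ^+ m * l)%:E * vnorm r (fun y => ((Kker b x y - Kker b z y) *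
      ind (dil (2 ^+ m) c l `\` dil (2 ^+ m.-1) c l) y)%R)
   * ((fine (vnorm r (ind (dil (2 ^+ m) c l))))^-1)%:E
   <= (dyadic_below 24 l m * (1 + b^-1))%:E)%E.
Proof.
move=> b0 re r2 l0 hx hz.
set S := dil (2 ^+ m) c l `\` dil (2 ^+ m.-1) c l.
have mdil k : measurable (dil k c l) by exact: measurable_itv.
change (fun y => _) with (Kker_diff_on b x z S).
have lam0 : 0 < 1 + b^-1 by rewrite addr_gt0 // invr_gt0.
have pos2m : 0 <= 2 ^+ m * l by rewrite mulr_ge0 ?ltW.
have [[y /Kker_diff_on_neq0 [Sy _ [w xzw wy]]]|diff0] :=
  pselect (exists y, Kker_diff_on b x z S y != 0); last first.
  rewrite vnorm_eq0 // => [|y]; last first.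
    by apply/eqP; apply: contra_notT diff0 => h; exists y.
  by rewrite mule0 mul0e lee_fin mulr_ge0 ?dyadic_below_ge0 ?(ltW lam0).
have wQ : dil (1/2) c l w by case: xzw => ->.
have [small sub] := dyadic_annulus_near l0 wQ wy Sy.
rewrite /dyadic_below small -[X in (_ <= X)%E]mule1 (EFinM (2 ^+ m * l)).
apply: lee_pmul.
- by rewrite mule_ge0 ?lee_fin ?vnorm_ge0.
- by rewrite lee_fin invr_ge0 fine_ge0 ?vnorm_ge0.
- apply: lee_pmul; rewrite ?lee_fin ?vnorm_ge0 //.
  apply: vnorm_le => //; apply: modular_le1_of_le_K2 => //.
    exact: measurable_Kker_diff_on (measurableD (mdil _) (mdil _)).
  exact: norm_Kker_diff_on_le.
- rewrite lee_fin; apply/inv_fine_le1/(vnorm_ind_ge1 re (mdil _) _ sub).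
  by rewrite addrAC subrr add0r ler1n.
Qed.

End Summands.

Unset Implicit Arguments.

Theorem mainTheorem17 (R : realType) (beta : R) (r : R -> \bar R) :
  0 < beta ->
  log_holder r ->
  (forall x : R, 0 <= x <= 1 -> r x = 2%:E) ->
  (1 < ess_inf_itv r 0 16)%E ->
  in_H r (Kker beta).
Proof.
move=> beta0 [r_exp _] r2 _.
have lam0 : 0 <= 1 + beta^-1 by rewrite addr_ge0 // invr_ge0 ltW.
exists (2 * 24 * (1 + beta^-1)) => c l l0 x z hx hz.
apply: le_trans (nneseries_dyadic_below_le (ler0n _ 24) l0 lam0).
apply: lee_nneseries => [m _ _|m _]; last exact: Kker_summand_le.
by rewrite !mule_ge0 ?vnorm_ge0 // lee_fin ?invr_ge0 ?fine_ge0 ?vnorm_ge0 // mulr_ge0 ?ltW.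
Qed.
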